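(* Let $k\ge0$ be an integer and let $G=(X\cup Y,E)$ be a bipartite graph that contains a vertex with more than $2k+2$ non-leaf neighbors. Then $G$ is not 2-layer $k$-planar.
   Context: A leaf is a vertex with exactly one neighbor. A 2-layer drawing of a bipartite graph $G=(X\cup Y,E)$ ($X\cap Y=\emptyset$, $E\subseteq X\times Y$) is a pair $(<_X,<_Y)$ of strict linear orders on $X$ and $Y$. Edges $\{x,y\},\{x',y'\}$ with $x\ne x'\in X$, $y\ne y'\in Y$ cross if $x<_Xx'$ and $y'<_Yy$. The drawing is $k$-planar if every edge crosses at most $k$ edges; $G$ is 2-layer $k$-planar if it admits such a drawing. *)

From mathcomp Require Import all_boot.
Set Implicit Arguments. Unset Strict Implicit. Unset Printing Implicit Defensive.

(* A bipartite graph G = (X ∪ Y, E) with finite disjoint vertex classes X, Y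
   (two separate finTypes) and edge set E ⊆ X × Y given by E : X -> Y -> bool. *)

Definition strict_linear_order (T : finType) (lt : rel T) : Prop :=
  (forall x, ~~ lt x x) /\
  (forall x y z, lt x y -> lt y z -> lt x z) /\
  (forall x y, x != y -> lt x y || lt y x).

Definition nbrX (X Y : finType) (E : X -> Y -> bool) (x : X) : {set Y} :=
  [set y | E x y].
Definition nbrY (X Y : finType) (E : X -> Y -> bool) (y : Y) : {set X} :=
  [set x | E x y].

Definition leafX (X Y : finType) (E : X -> Y -> bool) (x : X) : bool :=
  #|nbrX E x| == 1.
Definition leafY (X Y : finType) (E : X -> Y -> bool) (y : Y) : bool :=
  #|nbrY E y| == 1.

Definition cross (X Y : finType) (ltX : rel X) (ltY : rel Y)
  (e f : X * Y) : bool :=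
  [&& e.1 != f.1, e.2 != f.2 &
   (ltX e.1 f.1 && ltY f.2 e.2) || (ltX f.1 e.1 && ltY e.2 f.2)].

Definition is_edge (X Y : finType) (E : X -> Y -> bool) (e : X * Y) : bool :=
  E e.1 e.2.

Definition k_planar_drawing (X Y : finType) (E : X -> Y -> bool)
  (ltX : rel X) (ltY : rel Y) (k : nat) : Prop :=
  forall e : X * Y, is_edge E e ->
    #|[set f : X * Y | is_edge E f && cross ltX ltY e f]| <= k.

Definition two_layer_k_planar (X Y : finType) (E : X -> Y -> bool) (k : nat)
  : Prop :=
  exists (ltX : rel X) (ltY : rel Y),
    [/\ strict_linear_order ltX, strict_linear_order ltY &
        k_planar_drawing E ltX ltY k].

(* Let v have at least 2k+3 non-leaf neighbours and take the median u of them in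
   the drawing, so that more than k of them lie on each side of u.  Since u is
   not a leaf it has a neighbour w other than v; whichever side of v the vertex
   w is drawn on, the edge wu crosses every edge from v to the non-leaf
   neighbours on the opposite side of u, i.e. more than k edges.  The case of a
   vertex in Y reduces to that of a vertex in X by exchanging the two layers. *)
From mathcomp Require Import all_boot zify.

Set Implicit Arguments.
Unset Strict Implicit.
Unset Printing Implicit Defensive.

Section Median.

Variables (T : finType) (lt : rel T).
Hypothesis lt_order : strict_linear_order lt.

Definition below (S : {set T}) (y : T) : {set T} := [set z in S | lt z y].
Definition above (S : {set T}) (y : T) : {set T} := [set z in S | lt y z].

Lemma below_proper (S : {set T}) (y z : T) :
  y \in S -> lt y z -> below S y \proper below S z.
Proof.
case: lt_order => irr [trans _] yS ltyz; apply/properP; split.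
  by apply/subsetP=> w; rewrite !inE => /andP[-> ltwy]; exact: trans ltyz.
by exists y; rewrite !inE ?yS ?ltyz // (negbTE (irr y)) andbF.
Qed.

Lemma card_below_lt (S : {set T}) (y : T) : y \in S -> #|below S y| < #|S|.
Proof.
case: lt_order => irr _ yS; apply: proper_card; apply/properP; split.
  by apply/subsetP=> w; rewrite inE => /andP[].
by exists y; rewrite // inE yS (negbTE (irr y)).
Qed.

Lemma card_below_inj (S : {set T}) : {in S &, injective (fun y => #|below S y|)}.
Proof.
case: lt_order => _ [_ total] y z yS zS eq_card_yz; apply/eqP/negPn/negP => neq_yz.
by case/orP: (total _ _ neq_yz) => [/(below_proper yS)|/(below_proper zS)];
  move/proper_card; rewrite eq_card_yz ltnn.
Qed.

Lemma lt_asym (y z : T) : lt y z -> ~~ lt z y.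
Proof.
case: lt_order => irr [trans _] ltyz; apply/negP => /(trans _ _ _ ltyz).
by rewrite (negbTE (irr y)).
Qed.

Lemma lt_neq (y z : T) : lt y z -> y != z.
Proof. by case: lt_order => irr _; apply: contraTneq => ->; rewrite irr. Qed.

Lemma card_below_above (S : {set T}) (y : T) :
  y \in S -> #|below S y| + #|above S y| = #|S|.-1.
Proof.
case: lt_order => irr [_ total] yS.
rewrite (cardsD1 y S) yS -(cardsID [set z | lt z y] (S :\ y)) add1n /=.
congr (_ + _); apply: eq_card => z; rewrite !inE;
  case: (eqVneq z y) => [->|neq_zy] /=; rewrite ?(negbTE (irr y)) ?andbF //.
case/orP: (total _ _ neq_zy) => [ltzy|ltyz].
  by rewrite ltzy (negbTE (lt_asym ltzy)) andbF.
by rewrite ltyz (lt_asym ltyz) andbT.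
Qed.

(* The ranks [#|below S y|] of the elements of S are #|S| distinct numbers
   below #|S|, hence every such number is a rank. *)
Lemma exists_rank (S : {set T}) (i : nat) :
  i < #|S| -> exists2 y, y \in S & #|below S y| = i.
Proof.
move=> ltiS; pose ranks := [seq #|below S y| | y <- enum S].
have uniq_ranks : uniq ranks.
  by rewrite map_inj_in_uniq ?enum_uniq // => y z; rewrite !mem_enum; exact: card_below_inj.
have sub_ranks : {subset ranks <= iota 0 #|S|}.
  move=> r /mapP[y]; rewrite mem_enum => yS ->.
  by rewrite mem_iota leq0n add0n card_below_lt.
have size_ranks : size (iota 0 #|S|) <= size ranks by rewrite size_iota size_map -cardE.
have [_ ranks_iota] := uniq_min_size uniq_ranks sub_ranks size_ranks.
have /mapP[y] : i \in ranks by rewrite ranks_iota mem_iota.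
by rewrite mem_enum => yS ->; exists y.
Qed.

Lemma exists_median (S : {set T}) (k : nat) :
  2 * k + 2 < #|S| ->
  exists2 y, y \in S & k < #|below S y| /\ k < #|above S y|.
Proof.
move=> bigS; have [|y yS rank_y] := @exists_rank S k.+1; first lia.
by exists y => //; have := card_below_above yS; rewrite rank_y; lia.
Qed.

End Median.

Lemma exists_other_neighbour (T : finType) (A : {set T}) (a : T) :
  a \in A -> #|A| != 1 -> exists2 b, b \in A & b != a.
Proof.
move=> aA not_single; case: (set_0Vmem (A :\ a)) => [A_a0|[b]].
  by move: not_single; rewrite (cardsD1 a) aA A_a0 cards0.
by rewrite !inE => /andP[neq_ba bA]; exists b.
Qed.

Section Drawing.

Variables (X Y : finType) (E : X -> Y -> bool) (ltX : rel X) (ltY : rel Y) (k : nat).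
Hypothesis drawing_k_planar : k_planar_drawing E ltX ltY k.

Lemma card_fan_crossings (x x' : X) (y : Y) : E x' y ->
  #|[set z in nbrX E x | cross ltX ltY (x', y) (x, z)]| <= k.
Proof.
move=> Ex'y; apply: leq_trans (drawing_k_planar (e := (x', y)) Ex'y).
rewrite -(@card_imset _ _ (pair x)); last by move=> z z' [].
apply/subset_leq_card/subsetP.
by move=> f /imsetP[z]; rewrite !inE => /andP[Exz crossing] ->; rewrite /is_edge Exz.
Qed.

End Drawing.

Lemma not_k_planar_nonleaf_nbrX (X Y : finType) (E : X -> Y -> bool) (k : nat) (x : X) :
  2 * k + 2 < #|[set y in nbrX E x | ~~ leafY E y]| -> ~ two_layer_k_planar E k.
Proof.
set S := [set y in _ | _] => bigS [ltX [ltY [[_ [_ totalX]] ordY planar]]].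
have [y yS [big_below big_above]] := exists_median ordY bigS.
move: (yS); rewrite !inE => /andP[Exy nonleaf_y].
have x_nbr_y : x \in nbrY E y by rewrite inE.
have [x'] := exists_other_neighbour x_nbr_y nonleaf_y.
rewrite inE => Ex'y neq_x'x.
pose fan := [set z in nbrX E x | cross ltX ltY (x', y) (x, z)].
have fan_above : ltX x x' -> above ltY S y \subset fan.
  move=> ltxx'; apply/subsetP => z; rewrite !inE => /andP[/andP[Exz _] ltyz].
  by rewrite Exz /cross /= neq_x'x (lt_neq ordY ltyz) ltxx' ltyz orbT.
have fan_below : ltX x' x -> below ltY S y \subset fan.
  move=> ltx'x; apply/subsetP => z; rewrite !inE => /andP[/andP[Exz _] ltzy].
  by rewrite Exz /cross /= neq_x'x eq_sym (lt_neq ordY ltzy) ltx'x ltzy.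
have := card_fan_crossings planar x Ex'y; rewrite -/fan.
have neq_xx' : x != x' by rewrite eq_sym.
by case/orP: (totalX _ _ neq_xx') => [/fan_above|/fan_below] /subset_leq_card; lia.
Qed.

Definition swap_edge (X Y : finType) (e : X * Y) : Y * X := (e.2, e.1).

Lemma swap_edgeK (X Y : finType) : cancel (@swap_edge X Y) (@swap_edge Y X).
Proof. by case. Qed.

Lemma cross_swap_edge (X Y : finType) (ltX : rel X) (ltY : rel Y) (e f : X * Y) :
  cross ltY ltX (swap_edge e) (swap_edge f) = cross ltX ltY e f.
Proof. by rewrite /cross /= andbCA orbC (andbC (ltY _ _)) (andbC (ltY _ _)). Qed.

Lemma two_layer_k_planar_transpose (X Y : finType) (E : X -> Y -> bool) (k : nat) :
  two_layer_k_planar E k -> two_layer_k_planar (fun y x => E x y) k.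
Proof.
case=> ltX [ltY [ordX ordY planar]]; exists ltY, ltX; split=> // e Ee.
apply: leq_trans (planar (swap_edge e) Ee).
rewrite -(card_imset _ (can_inj (@swap_edgeK X Y))); apply/subset_leq_card/subsetP.
move=> f; rewrite inE => /andP[Ef crossing]; apply/imsetP; exists (swap_edge f).
  by rewrite inE -cross_swap_edge !swap_edgeK crossing andbT.
by case: f {Ef crossing}.
Qed.

Theorem mainTheorem9 (X Y : finType) (E : X -> Y -> bool) (k : nat) :
  ((exists x : X, #|[set y in nbrX E x | ~~ leafY E y]| > 2 * k + 2) \/
   (exists y : Y, #|[set x in nbrY E y | ~~ leafX E x]| > 2 * k + 2)) ->
  ~ two_layer_k_planar E k.
Proof.
case=> [[x big_x] | [y big_y]]; first exact: not_k_planar_nonleaf_nbrX big_x.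
by move/two_layer_k_planar_transpose; exact: not_k_planar_nonleaf_nbrX big_y.
Qed.
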